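(* Let $K$ be a field, $A=K[X_1,\ldots,X_m]$ with $m\ge2$, and let $N,k\in\mathbb{N}$ and $q=p^e$ for a prime $p$ and $e\ge0$. Let $J=(X_1^N+X_2^N+\cdots+X_m^N,\ (X_2^q,X_3^q,\ldots,X_m^q)^k)$. If $>$ denotes the graded reverse lexicographic order with $X_1>X_2>\cdots>X_m$, then $$\mathrm{in}_>(J)=(X_1^N,\ (X_2^q,X_3^q,\ldots,X_m^q)^k).$$
   Context: $\mathrm{in}_>(J)$ denotes the initial ideal of $J$, generated by leading monomials of elements of $J$ with respect to $>$. *)

From HB Require Import structures.
From mathcomp Require Import all_boot all_order all_algebra.
From mathcomp Require Import mpoly.
Set Implicit Arguments. Unset Strict Implicit. Unset Printing Implicit Defensive.
Import GRing.Theory.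
Local Open Scope ring_scope.

Section Ideals.
Variables (R : comRingType) (n : nat).
Local Notation P := {mpoly R[n]}.

Definition ideal_gen (S : P -> Prop) : P -> Prop :=
  fun p => exists l : seq (P * P),
    (forall x, x \in l -> S x.2) /\ p = \sum_(x <- l) x.1 * x.2.

Definition ideal_sum (I J : P -> Prop) : P -> Prop :=
  ideal_gen (fun p => I p \/ J p).
Definition ideal_mul (I J : P -> Prop) : P -> Prop :=
  ideal_gen (fun p => exists a b, I a /\ J b /\ p = a * b).
Definition ideal_pow (I : P -> Prop) (k : nat) : P -> Prop :=
  iter k (ideal_mul I) (ideal_gen (fun p => p = 1)).

(* graded reverse lexicographic order with X_0 > X_1 > ... > X_{n-1}:
   grevlex_lt a b  <->  a < b *)
Definition grevlex_lt (a b : 'X_{1..n}) : Prop :=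
  (mdeg a < mdeg b)%N \/
  (mdeg a = mdeg b /\
   exists i : 'I_n, (b i < a i)%N /\ forall j : 'I_n, (i < j)%N -> a j = b j).

Definition is_lead_mon (f : P) (t : 'X_{1..n}) : Prop :=
  t \in msupp f /\ forall s, s \in msupp f -> s != t -> grevlex_lt s t.

Definition initial_ideal (J : P -> Prop) : P -> Prop :=
  ideal_gen (fun g => exists f t, J f /\ f != 0 /\ is_lead_mon f t /\ g = 'X_[t]).

End Ideals.

From HB Require Import structures.
From mathcomp Require Import all_boot all_order all_algebra.
From mathcomp Require Import mpoly.
Import GRing.Theory.
Local Open Scope ring_scope.
Set Implicit Arguments. Unset Strict Implicit.

(* Write F = X_1^N + ... + X_m^N and G_k = (X_2^q, ..., X_m^q)^k.  The proof
   rests on three general facts, developed in this order: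
   - G_k is a monomial ideal: it consists of the polynomials all of whose
     exponents t are "heavy", i.e. sum_(i > 1) floor (t_i / q) >= k;
   - grevlex is a total monomial order, and X_1^N is the leading monomial of F
     (all monomials of F have the same degree and X_1 is the largest variable
     in the reverse lexicographic tie-break);
   - (lead_mon_combination) if m is the leading monomial of F and multiplying
     by m does not create heavy exponents, then the leading monomial of any
     a F + b with b in the monomial ideal is heavy or divisible by m.
   Since qweight ignores X_1, the last fact applies, so every leading
   monomial of J lies in (X_1^N, G_k); the converse inclusion holds because
   X_1^N = in(F) and every generator of G_k is its own leading monomial. *)

Section Ideals.
Variables (R : comNzRingType) (n : nat).
Local Notation P := {mpoly R[n]}.

Definition is_ideal (I : P -> Prop) : Prop :=
  [/\ I 0, (forall p q, I p -> I q -> I (p + q)) & (forall r p, I p -> I (r * p))].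

Lemma ideal0 I : is_ideal I -> I 0. Proof. by case. Qed.

Lemma idealD I p q : is_ideal I -> I p -> I q -> I (p + q).
Proof. by case=> _ hD _; apply: hD. Qed.

Lemma idealM I r p : is_ideal I -> I p -> I (r * p).
Proof. by case=> _ _ hM; apply: hM. Qed.

Lemma ideal_sum_mem I (T : Type) (s : seq T) (Q : pred T) (F : T -> P) :
  is_ideal I -> (forall i, Q i -> I (F i)) -> I (\sum_(i <- s | Q i) F i).
Proof.
move=> hI hF; elim: s => [|x s IH]; first by rewrite big_nil; apply: ideal0.
by rewrite big_cons; case: ifP => // hx; apply: idealD => //; apply: hF.
Qed.

Lemma ideal_gen_is_ideal (S : P -> Prop) : is_ideal (ideal_gen S).
Proof.
split.
- by exists [::]; split => //; rewrite big_nil.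
- move=> p q [l1 [h1 ->]] [l2 [h2 ->]]; exists (l1 ++ l2); split; last by rewrite big_cat.
  by move=> x; rewrite mem_cat => /orP[]; [apply: h1 | apply: h2].
- move=> r p [l [h ->]]; exists [seq (r * x.1, x.2) | x <- l]; split.
  + by move=> x /mapP[y yl ->] /=; apply: h.
  + by rewrite big_map mulr_sumr; apply: eq_bigr => x _; rewrite mulrA.
Qed.

Lemma ideal_gen_mem (S : P -> Prop) g : S g -> ideal_gen S g.
Proof.
move=> Sg; exists [:: (1, g)]; split; last by rewrite big_seq1 mul1r.
by move=> x; rewrite inE => /eqP ->.
Qed.

Lemma ideal_gen_min (I S : P -> Prop) : is_ideal I -> (forall g, S g -> I g) ->
  forall p, ideal_gen S p -> I p.
Proof.
move=> hI hS p [l [hl ->]]; rewrite big_seq_cond.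
apply: ideal_sum_mem => // x /andP[/hl /hS hx _]; exact: idealM.
Qed.

Lemma principal_add_is_ideal (F : P) (I : P -> Prop) : is_ideal I ->
  is_ideal (fun f => exists a b, f = a * F + b /\ I b).
Proof.
move=> hI; split.
- by exists 0, 0; rewrite mul0r addr0; split => //; apply: ideal0.
- move=> f g [a1 [b1 [-> h1]]] [a2 [b2 [-> h2]]]; exists (a1 + a2), (b1 + b2).
  by rewrite mulrDl addrACA; split => //; apply: idealD.
- move=> r f [a [b [-> h]]]; exists (r * a), (r * b).
  by rewrite mulrDr mulrA; split => //; apply: idealM.
Qed.

End Ideals.

Section MonomialIdeals.
Variables (R : comNzRingType) (n : nat).
Local Notation P := {mpoly R[n]}.

Definition mono_ideal (Q : pred 'X_{1..n}) : P -> Prop :=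
  fun g => forall t, t \in msupp g -> Q t.

Definition upward_closed (Q : pred 'X_{1..n}) : Prop :=
  forall t u, Q t -> Q (u + t)%MM.

Lemma mono_ideal_is_ideal (Q : pred _) : upward_closed Q -> is_ideal (mono_ideal Q).
Proof.
move=> hQ; split.
- by move=> t; rewrite mcoeff_msupp mcoeff0 eqxx.
- move=> p q hp hq t /msuppD_le; rewrite mem_cat => /orP[]; [exact: hp | exact: hq].
- move=> r p hp t /msuppM_le /allpairsP[[u v] [/= _ hv ->]]; exact/hQ/hp.
Qed.

Lemma mono_idealX (Q : pred _) t : Q t -> mono_ideal Q 'X_[t].
Proof. by move=> Qt s; rewrite msuppX inE => /eqP ->. Qed.

Lemma mono_ideal_gen (Q : pred _) g :
  mono_ideal Q g -> ideal_gen (fun h => exists t, Q t /\ h = 'X_[t]) g.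
Proof.
move=> hg; rewrite (mpolyE g) big_seq; apply: ideal_sum_mem.
  exact: ideal_gen_is_ideal.
move=> t /hg Qt; rewrite -mul_mpolyC; apply: idealM; first exact: ideal_gen_is_ideal.
by apply: ideal_gen_mem; exists t.
Qed.

Lemma mono_ideal_split (Q : pred _) (a : P) : upward_closed Q ->
  exists ag an, [/\ a = ag + an, mono_ideal Q ag & forall u, u \in msupp an -> ~~ Q u].
Proof.
move=> hQ; exists (\sum_(u <- msupp a | Q u) a@_u *: 'X_[u]).
exists (\sum_(u <- msupp a | ~~ Q u) a@_u *: 'X_[u]); split.
- by rewrite {1}(mpolyE a) (bigID Q).
- apply: ideal_sum_mem; first exact: mono_ideal_is_ideal.
  move=> u Qu; rewrite -mul_mpolyC.
  by apply: (idealM _ (mono_ideal_is_ideal hQ)); apply: mono_idealX.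
- move=> u /msupp_sum_le /flattenP[l /mapP[v]]; rewrite mem_filter => /andP[nQv _] ->.
  by move/msuppZ_le; rewrite msuppX inE => /eqP ->.
Qed.

End MonomialIdeals.

Section Grevlex.
Variable n : nat.
Local Notation lt := (@grevlex_lt n).

Definition grevlex_le (a b : 'X_{1..n}) : Prop := a = b \/ lt a b.
Local Notation le := grevlex_le.

Lemma grevlex_lt_irr a : ~ lt a a.
Proof. by case=> [|[_ [i []]]]; rewrite ltnn. Qed.

Lemma grevlex_lt_trans a b c : lt a b -> lt b c -> lt a c.
Proof.
case=> [h1|[e1 [i [hi1 hi2]]]] [h2|[e2 [j [hj1 hj2]]]].
- by left; exact: ltn_trans h1 h2.
- by left; rewrite -e2.
- by left; rewrite e1.
right; split; first by rewrite e1.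
case: (ltngtP i j) => [ij|ji|/val_inj eij].
- exists j; split; first by rewrite hi2.
  by move=> l jl; rewrite hi2 ?hj2 //; exact: ltn_trans jl.
- exists i; split; first by rewrite -hj2.
  by move=> l il; rewrite hi2 ?hj2 //; exact: ltn_trans il.
- subst j; exists i; split; first exact: ltn_trans hj1 hi1.
  by move=> l il; rewrite hi2 ?hj2.
Qed.

Lemma grevlex_lt_total a b : a != b -> lt a b \/ lt b a.
Proof.
move=> neq; case: (ltngtP (mdeg a) (mdeg b)) => [h|h|h]; [by left; left|by right; left|].
have [j hj] : exists j, a j != b j.
  apply/existsP; apply: contraNT neq; rewrite negb_exists => /forallP H.
  by apply/eqP/mnmP => i; apply/eqP; move: (H i); rewrite negbK.
(* the last coordinate where a and b differ decides the comparison *)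
case: (@arg_maxnP _ j (fun l => a l != b l) val hj) => i hi hmax.
have E (l : 'I_n) : (i < l)%N -> a l = b l.
  by move=> il; apply/eqP; apply/negPn/negP => /hmax /=; rewrite leqNgt il.
case: (ltngtP (a i) (b i)) => [c|c|c].
- by right; right; split => //; exists i; split => // l /E.
- by left; right; split => //; exists i; split => // l /E.
- by move: hi; rewrite c eqxx.
Qed.

Lemma grevlex_ltD2r a b c : lt a b -> lt (a + c)%MM (b + c)%MM.
Proof.
case=> [h|[h [i [h1 h2]]]]; first by left; rewrite !mdegD ltn_add2r.
right; split; first by rewrite !mdegD h.
exists i; split; first by rewrite !mnmDE ltn_add2r.
by move=> j /h2; rewrite !mnmDE => ->.
Qed.

Lemma grevlex_ltD2l a b c : lt a b -> lt (c + a)%MM (c + b)%MM.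
Proof. by rewrite ![(c + _)%MM]addmC; apply: grevlex_ltD2r. Qed.

Lemma grevlex_le_ltD a b c d : le a b -> lt c d -> lt (a + c)%MM (b + d)%MM.
Proof.
case=> [->|ab cd]; first exact: grevlex_ltD2l.
exact: grevlex_lt_trans (grevlex_ltD2r _ ab) (grevlex_ltD2l _ cd).
Qed.

Lemma grevlex_leD a b c d : le a b -> le c d -> le (a + c)%MM (b + d)%MM.
Proof.
move=> ab [->|cd]; last by right; exact: grevlex_le_ltD.
by case: ab => [->|ab]; [left | right; exact: grevlex_ltD2r].
Qed.

Lemma grevlex_seq_max (s : seq 'X_{1..n}) : s != [::] ->
  exists2 x, x \in s & forall y, y \in s -> le y x.
Proof.
elim: s => // y s IH _; case: (eqVneq s [::]) => [->|/IH[x xs H]].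
  by exists y => [|z]; rewrite !inE => // /eqP ->; left.
case: (eqVneq y x) => [->|/grevlex_lt_total[yx|xy]].
- by exists x => [|z]; rewrite !inE ?xs ?orbT // => /orP[/eqP->|/H]; [left|].
- by exists x => [|z]; rewrite !inE ?xs ?orbT // => /orP[/eqP->|/H]; [right|].
- exists y => [|z]; rewrite !inE ?eqxx // => /orP[/eqP->|/H[->|zx]]; [left|right|right] => //.
  exact: grevlex_lt_trans zx xy.
Qed.

Lemma lead_mon_le (R : comNzRingType) (f : {mpoly R[n]}) t s :
  is_lead_mon f t -> s \in msupp f -> le s t.
Proof. by case=> _ H hs; case: (eqVneq s t) => [->|/(H _ hs)]; [left|right]. Qed.

Lemma lead_mon_exists (R : comNzRingType) (f : {mpoly R[n]}) :
  f != 0 -> exists t, is_lead_mon f t.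
Proof.
rewrite -msupp_eq0 => /grevlex_seq_max[t ht H]; exists t; split => // s /H[->|//].
by rewrite eqxx.
Qed.

Lemma lead_mon_neq0 (R : comNzRingType) (f : {mpoly R[n]}) t :
  is_lead_mon f t -> f != 0.
Proof. by case=> ft _; rewrite -msupp_eq0; apply: contraTneq ft => ->. Qed.

Lemma lead_monX (R : comNzRingType) t : is_lead_mon ('X_[t] : {mpoly R[n]}) t.
Proof. by split=> [|s]; rewrite msuppX inE // => /eqP ->; rewrite eqxx. Qed.

End Grevlex.

Section LeadingTerms.
Variables (R : comNzRingType) (n : nat).
Local Notation P := {mpoly R[n]}.
Local Notation lt := (@grevlex_lt n).
Local Notation le := (@grevlex_le n).

Lemma msuppM_lead_le (a F : P) s m t :
  (forall u, u \in msupp a -> le u s) -> is_lead_mon F m ->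
  t \in msupp (a * F) -> le t (m + s)%MM.
Proof.
move=> ha hF /msuppM_le /allpairsP[[u v] [/= hu hv ->]].
by rewrite [(m + s)%MM]addmC; apply: grevlex_leD; [apply: ha | apply: lead_mon_le hF hv].
Qed.

Lemma mcoeffM_lead (a F : P) s m :
  (forall u, u \in msupp a -> le u s) -> is_lead_mon F m ->
  (a * F)@_(m + s) = a@_s * F@_m.
Proof.
move=> ha hF; have [mF Fm] := hF.
rewrite {1}(mpolyE F) mulr_sumr raddf_sum /= (bigD1_seq m) ?msupp_uniq //=.
rewrite -scalerAr mcoeffZ mcoeffMX mulrC big_seq_cond big1 ?addr0 // => v /andP[vF vm].
rewrite -scalerAr mcoeffZ; suff -> : (a * 'X_[v])@_(m + s) = 0 by rewrite mulr0.
apply/eqP; rewrite mcoeff_eq0 (perm_mem (msuppMX _ _)); apply/mapP => -[u hu emv].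
have : lt (u + v)%MM (s + m)%MM by apply: grevlex_le_ltD; [apply: ha | apply: Fm].
by rewrite addmC [(s + m)%MM]addmC -emv; apply: grevlex_lt_irr.
Qed.

End LeadingTerms.

Section LeadingMonomialOfCombination.
Variables (R : idomainType) (n : nat).
Local Notation P := {mpoly R[n]}.

Variable Q : pred 'X_{1..n}.
Hypothesis Q_up : upward_closed Q.
Variables (F : P) (m : 'X_{1..n}).
Hypothesis F_lead : is_lead_mon F m.
Hypothesis Q_shift : forall s, Q (m + s)%MM -> Q s.

(* Proof: move the part of the cofactor a lying in Q
   into the monomial ideal; if something remains, with leading monomial s,
   then m + s survives in f (it cannot cancel against the monomial ideal) and
   dominates every monomial of the remaining product, so it is the leading
   monomial of f unless that one lies in Q. *)
Lemma lead_mon_combination (f a b : P) t :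
  f = a * F + b -> mono_ideal Q b -> is_lead_mon f t ->
  Q t \/ exists s, t = (m + s)%MM.
Proof.
move=> ef hb [tf t_max].
have hQ := mono_ideal_is_ideal R Q_up.
have [ag [an [ea hag han]]] := mono_ideal_split a Q_up.
pose b' := ag * F + b.
have hb' : mono_ideal Q b' by apply: (idealD hQ) => //; rewrite mulrC; apply: (idealM _ hQ).
have {}ef : f = an * F + b' by rewrite ef ea /b' mulrDl [RHS]addrCA addrA.
case: (eqVneq an 0) => [an0|/(lead_mon_exists)[s hs]].
  by left; apply: hb'; move: tf; rewrite ef an0 mul0r add0r.
have an_le := lead_mon_le hs.
have wf : (m + s)%MM \in msupp f.
  have bw : b'@_(m + s) = 0.
    by apply/eqP; rewrite mcoeff_eq0; apply/negP => /hb' /Q_shift; apply/negP/han; case: hs.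
  rewrite mcoeff_msupp ef mcoeffD bw addr0 (mcoeffM_lead an_le F_lead).
  by rewrite mulf_neq0 // -mcoeff_msupp; [case: hs | case: F_lead].
case: (boolP (t \in msupp b')) => [/hb'|tb']; first by left.
have tF : t \in msupp (an * F).
  by move: tf; rewrite ef => /msuppD_le; rewrite mem_cat (negbTE tb') orbF.
case: (msuppM_lead_le an_le F_lead tF) => [->|lt_t]; first by right; exists s.
case: (eqVneq (m + s)%MM t) => [<-|ne]; first by right; exists s.
by case: (grevlex_lt_irr (grevlex_lt_trans lt_t (t_max _ wf ne))).
Qed.

End LeadingMonomialOfCombination.

Section FrobeniusPowerIdeal.
Variables (R : comNzRingType) (n q : nat).
Hypothesis q_gt0 : (0 < q)%N.
Local Notation P := {mpoly R[n]}.

(* The ideal (X_2^q, ..., X_m^q): here the variables are 'X_i, i : 'I_n, and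
   X_1 is 'X_i with val i = 0. *)
Definition frob_ideal : P -> Prop :=
  ideal_gen (fun g => exists i : 'I_n, (0 < val i)%N /\ g = 'X_i ^+ q).

(* How many factors X_i^q (i <> 1) the monomial X^t is divisible by. *)
Definition qweight (t : 'X_{1..n}) : nat := \sum_(i < n | (0 < val i)%N) t i %/ q.

Definition heavy (j : nat) : pred 'X_{1..n} := fun t => (j <= qweight t)%N.

Lemma qweightD u v : (qweight u + qweight v <= qweight (u + v))%N.
Proof.
rewrite -big_split /=; apply: leq_sum => i _.
by rewrite mnmDE divnD //; apply: leq_addr.
Qed.

Lemma heavy_up j : upward_closed (heavy j).
Proof.
move=> t u ht; apply: leq_trans ht _.
by apply: leq_trans (qweightD u t); apply: leq_addl.
Qed.

Lemma qweight_addU (i : 'I_n) t :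
  (0 < val i)%N -> qweight (U_(i) *+ q + t)%MM = (qweight t).+1.
Proof.
move=> i_gt0; rewrite /qweight (bigD1 i) //= [in RHS](bigD1 i) //=.
rewrite mnmDE mulmnE mnm1E eqxx mul1n -{1}[q]mul1n divnMDl // addSn.
congr (_ + _).+1; apply: eq_bigr => l /andP[_ li]; rewrite mnmDE mulmnE mnm1E.
by rewrite eq_sym (negbTE li) mul0n add0n.
Qed.

Lemma qweight_add_first (i : 'I_n) c t :
  val i = 0%N -> qweight (U_(i) *+ c + t)%MM = qweight t.
Proof.
move=> i0; apply: eq_bigr => l l_gt0; rewrite mnmDE mulmnE mnm1E.
suff /negbTE -> : i != l by rewrite mul0n add0n.
by apply: contraTneq l_gt0 => <-; rewrite i0.
Qed.

Lemma qweight_gt0_split t : (0 < qweight t)%N ->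
  exists i : 'I_n, exists t', (0 < val i)%N /\ t = (U_(i) *+ q + t')%MM.
Proof.
move=> w_gt0; have [i /andP[i_gt0 qti]] : exists i : 'I_n, (0 < val i)%N && (q <= t i)%N.
  apply/existsP; apply: contraTT w_gt0; rewrite negb_exists -leqNgt leqn0 => /forallP H.
  apply/eqP/big1 => l l_gt0; apply: divn_small.
  by move: (H l); rewrite l_gt0 -ltnNge.
exists i, (t - U_(i) *+ q)%MM; split => //; apply/mnmP => l.
rewrite mnmDE mnmBE mulmnE mnm1E; case: (eqVneq i l) => [<-|_] /=.
  by rewrite mul1n subnKC.
by rewrite mul0n subn0.
Qed.

Lemma frob_pow_is_ideal j : is_ideal (ideal_pow frob_ideal j).
Proof. by case: j => [|j]; apply: ideal_gen_is_ideal. Qed.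

Lemma frob_ideal_heavy g : frob_ideal g -> mono_ideal (heavy 1) g.
Proof.
apply: ideal_gen_min; first exact/mono_ideal_is_ideal/heavy_up.
move=> h [i [i_gt0 ->]]; rewrite mpolyXn -[(_ *+ q)%MM]addm0; apply: mono_idealX.
by rewrite /heavy qweight_addU.
Qed.

Lemma frob_pow_heavy j g : ideal_pow frob_ideal j g -> mono_ideal (heavy j) g.
Proof.
elim: j g => [|j IH] g; first by move=> _ t _.
apply: ideal_gen_min; first exact/mono_ideal_is_ideal/heavy_up.
move=> h [a [b [ha [hb ->]]]] t /msuppM_le /allpairsP[[u v] [/= hu hv ->]].
have hu1 : heavy 1 u := frob_ideal_heavy ha hu.
have hvj : heavy j v := IH b hb v hv.
by apply: leq_trans (qweightD u v); rewrite -add1n leq_add.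
Qed.

Lemma heavy_frob_pow j t : heavy j t -> ideal_pow frob_ideal j 'X_[t].
Proof.
elim: j t => [|j IH] t ht.
  rewrite -['X_[t]]mulr1; apply: (idealM _ (ideal_gen_is_ideal _)); exact: ideal_gen_mem.
have [i [t' [i_gt0 et]]] := qweight_gt0_split (leq_ltn_trans (leq0n j) ht).
move: ht; rewrite et /heavy /= qweight_addU // ltnS => /IH ht'.
rewrite mpolyXD -mpolyXn; apply: ideal_gen_mem; exists ('X_i ^+ q), 'X_[t'].
by split; first by apply: ideal_gen_mem; exists i.
Qed.

Lemma frob_pow_mono j g : ideal_pow frob_ideal j g <-> mono_ideal (heavy j) g.
Proof.
split; first exact: frob_pow_heavy.
move/mono_ideal_gen; apply: ideal_gen_min; first exact: frob_pow_is_ideal.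
by move=> x [t [ht ->]]; apply: heavy_frob_pow.
Qed.

End FrobeniusPowerIdeal.

Section PowerSum.
Variables (R : comNzRingType) (n N : nat) (i0 : 'I_n).
Hypotheses (N_gt0 : (0 < N)%N) (i0_first : val i0 = 0%N).
Local Notation P := {mpoly R[n]}.

Definition power_sum : P := \sum_(i < n) 'X_i ^+ N.

(* X_1^N is grevlex-larger than every other X_j^N: same degree, and X_j^N has
   the larger exponent at the last place where they differ. *)
Lemma power_sum_lt (j : 'I_n) : j != i0 -> grevlex_lt (U_(j) *+ N) (U_(i0) *+ N).
Proof.
move=> j_i0; right; split; first by rewrite !mdegMn !mdeg1.
exists j; rewrite !mulmnE !mnm1E eqxx eq_sym (negbTE j_i0) mul1n mul0n; split => // l jl.
rewrite !mulmnE !mnm1E; suff [/negbTE -> /negbTE ->] : i0 != l /\ j != l by [].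
by split; apply: contraTneq jl => <-; rewrite ?i0_first ?ltnn.
Qed.

Lemma mcoeff_power_sum s : power_sum@_s = \sum_(i < n) ((U_(i) *+ N)%MM == s)%:R.
Proof. by rewrite raddf_sum; apply: eq_bigr => i _ /=; rewrite mpolyXn mcoeffX. Qed.

Lemma power_sum_lead : is_lead_mon power_sum (U_(i0) *+ N).
Proof.
split.
  rewrite mcoeff_msupp mcoeff_power_sum (bigD1 i0) //= eqxx big1 ?addr0 ?oner_neq0 //.
  move=> j /power_sum_lt lt_j; case: eqP => // E.
  by rewrite E in lt_j; case: (grevlex_lt_irr lt_j).
move=> s; rewrite mcoeff_msupp mcoeff_power_sum => s_supp s_ne.
have [j /eqP ejs] : exists j : 'I_n, (U_(j) *+ N)%MM == s.
  apply/existsP; apply: contraNT s_supp; rewrite negb_exists => /forallP H.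
  by rewrite big1 // => j _; rewrite (negbTE (H j)).
by rewrite -ejs; apply: power_sum_lt; apply: contraNneq s_ne => ej; rewrite -ejs ej.
Qed.

End PowerSum.

Section InitialIdeal.
Variables (K : idomainType) (n N q k : nat) (i0 : 'I_n).
Hypotheses (N_gt0 : (0 < N)%N) (q_gt0 : (0 < q)%N) (i0_first : val i0 = 0%N).
Local Notation P := {mpoly K[n]}.
Local Notation F := (power_sum K n N).
Local Notation m0 := (U_(i0) *+ N)%MM.
Local Notation Pow := (ideal_pow (@frob_ideal K n q) k).

Definition J_ideal : P -> Prop := ideal_sum (ideal_gen (fun g => g = F)) Pow.

Definition target_ideal : P -> Prop :=
  ideal_sum (ideal_gen (fun g => exists i : 'I_n, val i = 0%N /\ g = 'X_i ^+ N)) Pow.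

Lemma J_ideal_combination f :
  J_ideal f -> exists a b, f = a * F + b /\ mono_ideal (heavy q k) b.
Proof.
have heavy_ideal : is_ideal (mono_ideal (heavy q k) : P -> Prop).
  exact: mono_ideal_is_ideal (heavy_up q_gt0 (j:=k)).
have hI := principal_add_is_ideal F heavy_ideal.
apply: (ideal_gen_min hI) => g [|/(frob_pow_mono q_gt0) hg].
  apply: (ideal_gen_min hI) => _ ->; exists 1, 0; rewrite mul1r addr0.
  by split => //; apply: ideal0 heavy_ideal.
by exists 0, g; rewrite mul0r add0r.
Qed.

Lemma target_monomial t :
  heavy q k t \/ (exists s, t = (m0 + s)%MM) -> target_ideal 'X_[t].
Proof.
case=> [/(heavy_frob_pow K q_gt0) ht | [s ->]]; first by apply: ideal_gen_mem; right.
rewrite mpolyXD mulrC -mpolyXn; apply: (idealM _ (ideal_gen_is_ideal _)).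
by apply/ideal_gen_mem; left; apply: ideal_gen_mem; exists i0.
Qed.

Lemma initial_sub_target g : initial_ideal J_ideal g -> target_ideal g.
Proof.
have shift s : heavy q k (m0 + s)%MM -> heavy q k s.
  by rewrite /heavy /= qweight_add_first.
have F_lead := power_sum_lead K N_gt0 i0_first.
apply: ideal_gen_min; first exact: ideal_gen_is_ideal.
move=> _ [f [t [/J_ideal_combination[a [b [ef hb]]] [_ [t_lead ->]]]]].
apply: target_monomial.
apply: (lead_mon_combination _ F_lead shift ef hb t_lead); exact: heavy_up.
Qed.

(* Conversely X_1^N is the leading monomial of F, and each generator X^t of
   (X_2^q, ..., X_m^q)^k lies in J and is its own leading monomial. *)
Lemma target_sub_initial g : target_ideal g -> initial_ideal J_ideal g.
Proof.
have lead_gen (f : P) t : J_ideal f -> is_lead_mon f t -> initial_ideal J_ideal 'X_[t].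
  move=> Jf ft; apply: ideal_gen_mem; exists f, t.
  by split; [|split; first exact: lead_mon_neq0 ft].
apply: ideal_gen_min; first exact: ideal_gen_is_ideal.
move=> h [gen|/(frob_pow_mono q_gt0)/mono_ideal_gen].
  apply: (ideal_gen_min (ideal_gen_is_ideal _)) gen => _ [i [i_first ->]].
  have -> : i = i0 by apply: val_inj; rewrite i_first i0_first.
  rewrite mpolyXn; apply: (lead_gen F); last exact: power_sum_lead.
  by apply/ideal_gen_mem; left; apply: ideal_gen_mem.
apply: (ideal_gen_min (ideal_gen_is_ideal _)) => _ [t [ht ->]].
apply: (lead_gen 'X_[t]); last exact: lead_monX.
by apply/ideal_gen_mem; right; apply: heavy_frob_pow.
Qed.

End InitialIdeal.

Theorem lemma5p1 (K : fieldType) (m : nat) (hm : (2 <= m)%N)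
    (N k p e : nat) (hN : (0 < N)%N) (hp : prime p) :
  let q := (p ^ e)%N in
  let Iq : {mpoly K[m]} -> Prop :=
    ideal_gen (fun g => exists i : 'I_m, (0 < val i)%N /\ g = 'X_i ^+ q) in
  let J := ideal_sum
             (ideal_gen (fun g => g = \sum_(i < m) 'X_i ^+ N))
             (ideal_pow Iq k) in
  let RHS := ideal_sum
               (ideal_gen (fun g => exists i : 'I_m, val i = 0%N /\ g = 'X_i ^+ N))
               (ideal_pow Iq k) in
  forall g : {mpoly K[m]}, initial_ideal J g <-> RHS g.
Proof.
move=> q Iq J RHS g.
have q_gt0 : (0 < q)%N by rewrite expn_gt0 prime_gt0.
(* X_1 is the variable of index 0, which exists since m >= 2 *)
pose i0 : 'I_m := Ordinal (leq_trans (ltn0Sn 1) hm).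
split.
- exact: (@initial_sub_target K m N q k i0 hN q_gt0 erefl g).
- exact: (@target_sub_initial K m N q k i0 hN q_gt0 erefl g).
Qed.
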